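(* Let $d\ge1$, let $X$ be a lazy simple random walk on $\mathbb{Z}^d$ started at $0$, and let $(D_s)_{s\ge0}$ be subsets of $\mathbb{Z}^d$ symmetric about the origin, i.e. $D_s=-D_s$ for all $s$. If $\sigma$ is a reflection of $\mathbb{Z}^d$ (with specified half-spaces $H^+,H^-$), then for all $t\ge0$, \[ \mathbb{E}\Big[\mathrm{vol}\Big(\bigcup_{s=0}^t(X_s+D_s)\Big)\Big]\ \ge\ \mathbb{E}\Big[\mathrm{vol}\Big(\bigcup_{s=0}^t(X_s+D_s^\sigma)\Big)\Big]. \]
   Context: $\mathbb{Z}^d$ carries the nearest-neighbour graph ($\ell^1$) distance. A reflection of a metric space $(M,d)$ is an isometry $\sigma:M\to M$ together with a decomposition $M=H^0\sqcup H^+\sqcup H^-$ such that $\sigma^2x=x$ for all $x$, $H^0$ is the set of fixed points of $\sigma$, $\sigma H^+=H^-$, and $d(x,y)<d(x,\sigma y)$ for all $x,y\in H^+$. The two-point rearrangement $A^\sigma$ of $A\subseteq M$ is defined by $A^\sigma\cap H^+=(A\cup\sigma A)\cap H^+$, $A^\sigma\cap H^-=(A\cap\sigma A)\cap H^-$, $A^\sigma\cap H^0=A\cap H^0$. The lazy simple random walk stays put with probability $1/2$ and otherwise moves from $x$ to $x\pm e_i$, each with probability $1/(4d)$. $\mathrm{vol}(S)$ is the cardinality of $S$ and $x+S=\{x+y:y\in S\}$. *)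

From HB Require Import structures.
From mathcomp Require Import all_boot all_order all_algebra.
From mathcomp Require Import boolp classical_sets reals ereal counting_measure.
Set Implicit Arguments. Unset Strict Implicit. Unset Printing Implicit Defensive.
Import Order.TTheory GRing.Theory Num.Theory.
Local Open Scope classical_set_scope.
Local Open Scope ring_scope.

Definition Zd (d : nat) := 'rV[int]_d.

Definition dist1 (d : nat) (x y : Zd d) : nat := (\sum_(i < d) `|x ord0 i - y ord0 i|%N)%N.

Definition is_reflection (d : nat) (sigma : Zd d -> Zd d) (H0 Hp Hm : set (Zd d)) : Prop :=
  (forall x y, dist1 (sigma x) (sigma y) = dist1 x y) /\
  (forall x, sigma (sigma x) = x) /\
  (H0 `|` Hp `|` Hm = setT /\ H0 `&` Hp = set0 /\ H0 `&` Hm = set0 /\ Hp `&` Hm = set0) /\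
  H0 = [set x | sigma x = x] /\
  sigma @` Hp = Hm /\
  (forall x y, Hp x -> Hp y -> (dist1 x y < dist1 x (sigma y))%N).

Definition two_point (d : nat) (sigma : Zd d -> Zd d) (H0 Hp Hm : set (Zd d))
    (A : set (Zd d)) : set (Zd d) :=
  ((A `|` sigma @` A) `&` Hp) `|` ((A `&` sigma @` A) `&` Hm) `|` (A `&` H0).

Definition translate (d : nat) (x : Zd d) (S : set (Zd d)) : set (Zd d) :=
  [set x + y | y in S].

Definition negset (d : nat) (S : set (Zd d)) : set (Zd d) := [set - y | y in S].

Definition vol (R : realType) (d : nat) (S : set (Zd d)) : \bar R := counting S.

(* Steps of the lazy simple random walk: None = stay put,
   Some (i, b) = move by +e_i (b = true) or -e_i (b = false). *)
Definition step (d : nat) := option ('I_d * bool).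

Definition step_vec (d : nat) (u : step d) : Zd d :=
  match u with
  | None => 0
  | Some (i, b) => (if b then 1 else -1) *: delta_mx ord0 i
  end.

Definition step_prob (R : realType) (d : nat) (u : step d) : R :=
  match u with
  | None => 1 / 2
  | Some _ => 1 / (4 * d%:R)
  end.

Definition walk_pos (d t : nat) (w : {ffun 'I_t -> step d}) (s : nat) : Zd d :=
  \sum_(k < t | (k < s)%N) step_vec (w k).

Definition path_prob (R : realType) (d t : nat) (w : {ffun 'I_t -> step d}) : R :=
  \prod_(k < t) step_prob R (w k).

(* E[ vol( \bigcup_{s=0}^t (X_s + D_s) ) ] for the lazy SRW X started at 0;
   the law of (X_0,...,X_t) is that of the partial sums of t i.i.d. steps. *)
Definition expected_range_vol (R : realType) (d t : nat) (D : nat -> set (Zd d)) : \bar R :=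
  (\sum_(w : {ffun 'I_t -> step d})
     (path_prob R w)%:E *
     vol R (\bigcup_(s in [set s : nat | (s <= t)%N]) translate (walk_pos w s) (D s)))%E.

(* Write Y_s = z - X_s: the steps of X are symmetric, so Y is a lazy walk
   started at z, and E[vol (U_s (X_s + D_s))] = sum_z (1 - a(z)) where
   a(z) = P(Y_s \in ~D_s for all s <= t).  The complement of D^sigma is the
   two-point rearrangement of ~D with H+ and H- exchanged, so it suffices to
   compare a with the function a^sigma built from the rearranged sets.  By
   induction on t, a^sigma dominates a on every pair {y, sigma y}:
   a(y) + a(sigma y) <= a^sigma(y) + a^sigma(sigma y) and, on the preferred
   half, a^sigma(y) >= max(a(y), a(sigma y), a^sigma(sigma y)).  This is kept
   by multiplying with the indicators of C and C^sigma, and by one step of the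
   walk, whose kernel is a decreasing function of the l1 distance, hence gives
   more weight to y than to sigma y when x and y lie on the same side.
   Summing over sigma-invariant sets of sites gives the claim. *)

From HB Require Import structures.
From mathcomp Require Import all_boot all_order all_algebra.
From mathcomp Require Import boolp classical_sets reals ereal counting_measure.
From mathcomp Require Import finmap cardinality numfun lra.
Import Order.TTheory GRing.Theory Num.Theory.
Local Open Scope classical_set_scope.
Local Open Scope ring_scope.
Set Implicit Arguments. Unset Strict Implicit. Unset Printing Implicit Defensive.

Section LazyStep.
Variable d : nat.
Implicit Types (x y : Zd d) (u : step d).

Lemma step_vecE u j : step_vec u ord0 j =
  if u is Some (i, b) then (i == j)%:R * (if b then 1 else -1) else 0.
Proof. by case: u => [[i b]|]; rewrite /step_vec !mxE // mulrC eqxx eq_sym. Qed.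

Lemma dist1_sub_step x u : dist1 x (x - step_vec u) = (u != None).
Proof.
have -> : dist1 x (x - step_vec u) = (\sum_j `|step_vec u ord0 j|)%N.
  by apply: eq_bigr => j _; rewrite !mxE opprB addrC subrK.
case: u => [[i b]|]; last by rewrite big1 // => j _; rewrite step_vecE.
rewrite (bigD1 i) // big1 ?addn0 => [|j /negbTE ji].
  by rewrite step_vecE eqxx mul1r; case: b.
by rewrite step_vecE eq_sym ji mul0r.
Qed.

Lemma step_vec_inj : injective (@step_vec d).
Proof.
have nz (i : 'I_d) b : step_vec (Some (i, b)) ord0 i != 0 by rewrite step_vecE eqxx mul1r; case: b.
move=> [[i b]|] [[j c]|] // /matrixP E; last 2 first.
- by move: (nz i b); rewrite E mxE eqxx.
- by move: (nz j c); rewrite -E mxE eqxx.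
have := E ord0 i; rewrite !step_vecE eqxx mul1r => {E}.
by case: (eqVneq j i) => [->|_]; rewrite ?mul1r ?mul0r; case: b; case: c.
Qed.

Lemma dist1_le1_step x y : (dist1 x y <= 1)%N -> exists u, y = x - step_vec u.
Proof.
rewrite /dist1; have [i xyi|eq0 _] := pickP (fun i => `|x ord0 i - y ord0 i|%N != 0%N).
  rewrite (bigD1 i) //= => le1.
  have {}xyi : `|x ord0 i - y ord0 i|%N = 1%N by move: xyi le1; case: (`|_|%N) => [|[]].
  have other j : j != i -> x ord0 j = y ord0 j.
    move=> ji; apply/eqP; rewrite -subr_eq0 -absz_eq0; apply/eqP.
    by move: le1; rewrite xyi (bigD1 j) //= addnA; case: (`|_|%N).
  have [b xyb] : exists b : bool, x ord0 i - y ord0 i = if b then 1 else -1.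
    by move: xyi; case: (x ord0 i - y ord0 i) => [n /= ->|[_|n //]]; [exists true|exists false].
  exists (Some (i, b)); apply/matrixP => k j; rewrite (ord1 k) !mxE eqxx /=.
  have [->|ji] := eqVneq j i; first by rewrite mulr1 -xyb opprB addrC subrK.
  by rewrite mulr0 subr0 other.
exists None; apply/matrixP => k j; rewrite (ord1 k) !mxE subr0.
by move/negbFE: (eq0 j); rewrite absz_eq0 subr_eq0 => /eqP.
Qed.
End LazyStep.

Section Reflection.
Variables (d : nat) (sigma : Zd d -> Zd d) (H0 Hp Hm : set (Zd d)).
Hypothesis hrefl : is_reflection sigma H0 Hp Hm.
Implicit Types (x y : Zd d) (A : set (Zd d)).

Lemma sigma_dist1 x y : dist1 (sigma x) (sigma y) = dist1 x y.
Proof. by case: hrefl. Qed.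

Lemma sigmaK : involutive sigma.
Proof. by case: hrefl => _ []. Qed.

Lemma reflection_cases x : [\/ H0 x, Hp x | Hm x].
Proof.
case: hrefl => _ [_ [[cover _] _]].
have : (H0 `|` Hp `|` Hm) x by rewrite cover.
by case=> [[]|]; [constructor 1|constructor 2|constructor 3].
Qed.

Lemma reflection_disjoint x :
  [/\ H0 x -> ~ Hp x, H0 x -> ~ Hm x & Hp x -> ~ Hm x].
Proof.
case: hrefl => _ [_ [[_ [d0p [d0m dpm]]] _]].
by split=> h1 h2; [move: d0p|move: d0m|move: dpm] => /seteqP[/(_ x (conj h1 h2))].
Qed.

Lemma H0_fixed x : H0 x -> sigma x = x.
Proof. by case: hrefl => _ [_ [_ [-> _]]]. Qed.

Lemma image_sigmaE A x : (sigma @` A) x <-> A (sigma x).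
Proof.
split=> [[y Ay <-]|Asx]; first by rewrite sigmaK.
by exists (sigma x); rewrite ?sigmaK.
Qed.

Lemma Hm_sigmaE x : Hm (sigma x) <-> Hp x.
Proof. by case: hrefl => _ [_ [_ [_ [<- _]]]]; rewrite image_sigmaE sigmaK. Qed.

Lemma Hp_sigmaE x : Hp (sigma x) <-> Hm x.
Proof. by rewrite -Hm_sigmaE sigmaK. Qed.

Lemma Hp_dist1 x y : Hp x -> Hp y -> (dist1 x y < dist1 x (sigma y))%N.
Proof. by case: hrefl => _ [_ [_ [_ [_]]]]; apply. Qed.

Lemma Hm_dist1 x y : Hm x -> Hm y -> (dist1 x y < dist1 x (sigma y))%N.
Proof.
rewrite -!Hp_sigmaE => /Hp_dist1 hx /hx.
by rewrite !sigma_dist1.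
Qed.

Lemma in_two_point_Hp A y : Hp y ->
  (y \in two_point sigma H0 Hp Hm A) = (y \in A) || (sigma y \in A).
Proof.
move=> py; have [p0 _ pm] := reflection_disjoint y.
apply/idP/orP; rewrite !in_setE.
- case=> [[[[|/image_sigmaE]]|[_ /(pm py)]]|[_ /p0]] //; by [left|right].
- by case=> ?; left; left; split=> //; [left|right; apply/image_sigmaE].
Qed.

Lemma in_two_point_Hm A y : Hm y ->
  (y \in two_point sigma H0 Hp Hm A) = (y \in A) && (sigma y \in A).
Proof.
move=> my; have [_ m0 pm] := reflection_disjoint y.
apply/idP/andP; rewrite !in_setE.
- by case=> [[[_ /pm]|[[? /image_sigmaE]]]|[_ /m0]].
- by case=> ? ?; left; right; split=> //; split=> //; apply/image_sigmaE.
Qed.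

Lemma in_two_point_H0 A y : H0 y -> (y \in two_point sigma H0 Hp Hm A) = (y \in A).
Proof.
move=> zy; have [/(_ zy) p0 /(_ zy) m0 _] := reflection_disjoint y.
by apply/idP/idP; rewrite !in_setE; [case=> [[[]|[]]|[]]|right].
Qed.
End Reflection.

Lemma reflection_swap d (sigma : Zd d -> Zd d) H0 Hp Hm :
  is_reflection sigma H0 Hp Hm -> is_reflection sigma H0 Hm Hp.
Proof.
move=> hrefl; have [dist [inv [[cover [d0p [d0m dpm]]] [fixed [img _]]]]] := hrefl.
do 4 split=> //; first by rewrite -setUA (setUC Hm) setUA.
  by split=> //; split=> //; rewrite setIC.
split; last exact: (Hm_dist1 hrefl).
rewrite -img image_comp (_ : sigma \o sigma = id) ?image_id //.
exact: funext (sigmaK hrefl).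
Qed.

Lemma two_pointC d (sigma : Zd d -> Zd d) H0 Hp Hm (A : set (Zd d)) :
  is_reflection sigma H0 Hp Hm ->
  ~` two_point sigma H0 Hp Hm A = two_point sigma H0 Hm Hp (~` A).
Proof.
move=> hrefl; have hswap := reflection_swap hrefl.
suff memE y : (y \in ~` two_point sigma H0 Hp Hm A) = (y \in two_point sigma H0 Hm Hp (~` A)).
  by apply/predeqP => y; rewrite -(in_setE (~` _)) -(in_setE (two_point _ _ _ _ _)) memE.
rewrite in_setC; case: (reflection_cases hrefl y) => hy.
- by rewrite !(in_two_point_H0 hrefl, in_two_point_H0 hswap) // in_setC.
- by rewrite (in_two_point_Hp hrefl) // (in_two_point_Hm hswap) // !in_setC negb_or.
- by rewrite (in_two_point_Hm hrefl) // (in_two_point_Hp hswap) // !in_setC negb_and.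
Qed.

Lemma two_point_finite d (sigma : Zd d -> Zd d) H0 Hp Hm (A : set (Zd d)) :
  finite_set A -> finite_set (two_point sigma H0 Hp Hm A).
Proof.
move=> fA; apply: (@sub_finite_set _ _ (A `|` sigma @` A)).
  by move=> y [[[Ay _]|[[Ay _] _]]|[Ay _]] //; left.
by rewrite finite_setU; split; last exact: finite_image.
Qed.

Section SigmaClosure.
Variables (T : eqType) (sigma : T -> T).
Hypothesis sigma_inv : involutive sigma.

Definition sigma_closure (s : seq T) := undup (s ++ map sigma s).

Lemma sigma_closure_uniq s : uniq (sigma_closure s).
Proof. exact: undup_uniq. Qed.

Lemma sigma_closure_sub s : {subset s <= sigma_closure s}.
Proof. by move=> z zs; rewrite mem_undup mem_cat zs. Qed.

Lemma sigma_closure_closed s : {in sigma_closure s, forall z, sigma z \in sigma_closure s}.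
Proof.
move=> z; rewrite !mem_undup !mem_cat => /orP[zs|/mapP[y ys ->]].
  by rewrite map_f ?orbT.
by rewrite sigma_inv ys.
Qed.

Lemma sum_sigma_closed (R : nmodType) (S : seq T) (F : T -> R) :
  uniq S -> {in S, forall z, sigma z \in S} ->
  \sum_(z <- S) F (sigma z) = \sum_(z <- S) F z.
Proof.
move=> uS cS; rewrite -(big_map sigma predT F); apply: perm_big.
apply: uniq_perm; rewrite ?map_inj_uniq //; first exact: can_inj sigma_inv.
move=> z; apply/mapP/idP => [[y yS ->]|zS]; first exact: cS.
by exists (sigma z); rewrite ?sigma_inv ?cS.
Qed.
End SigmaClosure.

(* [(g1, g2)] is decreasing and weakly majorizes [(f1, f2)]. *)
Definition pair_dominated (R : numDomainType) (f1 f2 g1 g2 : R) :=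
  [/\ f1 + f2 <= g1 + g2, g2 <= g1, f1 <= g1 & f2 <= g1].

Lemma pair_dominated_mulb (R : realFieldType) (a b : bool) (f1 f2 g1 g2 : R) :
  0 <= g1 -> pair_dominated f1 f2 g1 g2 ->
  pair_dominated (a%:R * f1) (b%:R * f2) ((a || b)%:R * g1) ((a && b)%:R * g2).
Proof. by move=> g1_ge0 [*]; case: a; case: b; rewrite /= ?mul1r ?mul0r; split; lra. Qed.

Lemma pair_dominated_mix (R : realFieldType) (al be f1 f2 g1 g2 : R) :
  0 <= be <= al -> pair_dominated f1 f2 g1 g2 ->
  pair_dominated (al * f1 + be * f2) (be * f1 + al * f2)
                 (al * g1 + be * g2) (be * g1 + al * g2).
Proof. by move=> /andP[be_ge0 le_be_al] [*]; split; nra. Qed.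

Section Domination.
Variables (R : realFieldType) (d : nat) (sigma : Zd d -> Zd d) (H0 Hp Hm : set (Zd d)).
Hypothesis hrefl : is_reflection sigma H0 Hp Hm.
Implicit Types (f g F G : Zd d -> R) (S : seq (Zd d)).

Definition two_point_dominated f g :=
  [/\ forall y, 0 <= g y, forall y, H0 y -> f y <= g y &
      forall y, Hp y -> pair_dominated (f y) (f (sigma y)) (g y) (g (sigma y))].

Lemma sum_le_sigma_closed S F G : uniq S -> {in S, forall z, sigma z \in S} ->
  (forall y, H0 y -> F y <= G y) ->
  (forall y, Hp y -> F y + F (sigma y) <= G y + G (sigma y)) ->
  \sum_(z <- S) F z <= \sum_(z <- S) G z.
Proof.
move=> uS cS le0 lep.
have pairE (H : Zd d -> R) : \sum_(z <- S) (H z + H (sigma z)) =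
    \sum_(z <- S) H z + \sum_(z <- S) H z.
  by rewrite big_split /= (sum_sigma_closed (sigmaK hrefl) H).
suff : \sum_(z <- S) (F z + F (sigma z)) <= \sum_(z <- S) (G z + G (sigma z)).
  by rewrite !pairE; lra.
apply: ler_sum => y _; case: (reflection_cases hrefl y) => [zy|/lep //|].
  by rewrite (H0_fixed hrefl zy); have := le0 _ zy; lra.
by move=> /(Hp_sigmaE hrefl) /lep; rewrite (sigmaK hrefl) addrC [G _ + _]addrC.
Qed.

Lemma two_point_dominated_sum_le S f g : uniq S -> {in S, forall z, sigma z \in S} ->
  two_point_dominated f g -> \sum_(z <- S) f z <= \sum_(z <- S) g z.
Proof. by move=> uS cS [_ le0 pd]; apply: sum_le_sigma_closed => // y /pd[]. Qed.

Lemma two_point_dominated_cst1 : two_point_dominated (fun=> 1) (fun=> 1).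
Proof. by split=> // y _; split; rewrite ?lexx. Qed.

Lemma two_point_dominated_indic A f g : two_point_dominated f g ->
  two_point_dominated (\1_A \* f) (\1_(two_point sigma H0 Hp Hm A) \* g).
Proof.
case=> g_ge0 le0 pd; split=> y /=; rewrite !indicE.
- by rewrite mulr_ge0.
- by move=> zy; rewrite (in_two_point_H0 hrefl _ zy) ler_wpM2l ?le0.
move=> py; have msy : Hm (sigma y) by apply/(Hm_sigmaE hrefl).
rewrite (in_two_point_Hp hrefl _ py) (in_two_point_Hm hrefl _ msy) (sigmaK hrefl) andbC.
exact: pair_dominated_mulb (g_ge0 y) (pd y py).
Qed.

Section Kernel.
Variable K : Zd d -> Zd d -> R.
Hypotheses (K_ge0 : forall x y, 0 <= K x y)
  (K_sigma : forall x y, K (sigma x) (sigma y) = K x y)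
  (K_Hp : forall x y, Hp x -> Hp y -> K x (sigma y) <= K x y).

Let K_sigmal x y : K (sigma x) y = K x (sigma y).
Proof. by rewrite -{1}(sigmaK hrefl y) K_sigma. Qed.

Lemma two_point_dominated_kernel S f g x :
  uniq S -> {in S, forall z, sigma z \in S} -> two_point_dominated f g ->
  let P h x := \sum_(y <- S) K x y * h y in
  [/\ 0 <= P g x, H0 x -> P f x <= P g x &
      Hp x -> pair_dominated (P f x) (P f (sigma x)) (P g x) (P g (sigma x))].
Proof.
move=> uS cS [g_ge0 le0 pd] P; split.
- by apply: sumr_ge0 => y _; rewrite mulr_ge0.
- move=> zx; apply: sum_le_sigma_closed => // y.
    by move=> /le0; apply: ler_wpM2l.
  move=> /pd[fg _ _ _]; rewrite -[in K x (sigma y)](H0_fixed hrefl zx) K_sigmal (sigmaK hrefl).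
  by rewrite -!mulrDr ler_wpM2l.
move=> px.
(* [x] weighs [y] by [K x y] and [sigma y] by the smaller [K x (sigma y)];
   [sigma x] uses the same two weights the other way round. *)
have mix y : Hp y -> pair_dominated
    (K x y * f y + K x (sigma y) * f (sigma y)) (K x (sigma y) * f y + K x y * f (sigma y))
    (K x y * g y + K x (sigma y) * g (sigma y)) (K x (sigma y) * g y + K x y * g (sigma y)).
  by move=> py; apply: pair_dominated_mix (pd _ py); rewrite K_ge0 K_Hp.
have H0K y : H0 y -> [/\ K (sigma x) y = K x y, 0 <= K x y & f y <= g y].
  by move=> zy; rewrite K_sigmal (H0_fixed hrefl zy) K_ge0 le0.
split; rewrite /P -?big_split /=; apply: sum_le_sigma_closed => // y.
all: try by move=> /H0K[kE K0 /(ler_wpM2l K0) kfg]; rewrite ?kE; lra.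
all: by move=> /mix[? ? ? ?]; rewrite ?K_sigmal ?(sigmaK hrefl); lra.
Qed.
End Kernel.
End Domination.

Section Walk.
Variables (R : realType) (d : nat).
Implicit Types (x y : Zd d) (u : step d) (f g : Zd d -> R).

Lemma step_prob_ge0 u : 0 <= step_prob R u.
Proof. by case: u => [a|]; rewrite /= mul1r invr_ge0 // mulr_ge0 ?ler0n. Qed.

Definition transition_kernel x y : R :=
  \sum_(u : step d) step_prob R u * (y == x - step_vec u)%:R.

Definition lazy_weight (n : nat) : R :=
  match n with 0%N => 1 / 2 | 1%N => 1 / (4 * d%:R) | _ => 0 end.

Lemma lazy_weight_ge0 n : 0 <= lazy_weight n.
Proof. by case: n => [|[|n]] //=; rewrite mul1r invr_ge0 // mulr_ge0 ?ler0n. Qed.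

(* For d = 0 the weight 1 / (4 * 0) is 0, so no assumption on d is needed. *)
Lemma lazy_weight_antitone : {homo lazy_weight : m n / (m <= n)%N >-> n <= m}.
Proof.
have le_half : 1 / (4 * d%:R) <= 1 / 2 :> R.
  case: d => [|n]; first by rewrite mulr0 invr0 mulr0.
  rewrite !mul1r lef_pV2 ?posrE ?mulr_gt0 ?ltr0n //.
  have : 1 <= n.+1%:R :> R by rewrite ler1n.
  lra.
move=> m n; case: m => [|[|m]]; case: n => [|[|n]] //= _;
  by rewrite ?lexx ?le_half ?(lazy_weight_ge0 0) ?(lazy_weight_ge0 1).
Qed.

Lemma transition_kernel_dist x y : transition_kernel x y = lazy_weight (dist1 x y).
Proof.
rewrite /transition_kernel; have [[u ->]|far] := pselect (exists u, y = x - step_vec u).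
  rewrite (bigD1 u) //= eqxx mulr1 big1 ?addr0 => [|v vu].
    by rewrite dist1_sub_step; case: u => [[]|].
  rewrite (_ : (_ == _) = false) ?mulr0 //; apply: contraNF vu.
  by move=> /eqP/(addrI x)/oppr_inj/step_vec_inj ->.
rewrite big1 => [|u _]; last by case: eqP => [yE|]; [case: far; exists u|rewrite mulr0].
by case: (leqP (dist1 x y) 1) => [/dist1_le1_step/far //|]; case: (dist1 x y) => [|[]].
Qed.

Definition transition f x : R := \sum_(u : step d) step_prob R u * f (x - step_vec u).

Definition neighbours x := [seq x - step_vec u | u <- index_enum (step d)].

Lemma mem_neighbours x u : x - step_vec u \in neighbours x.
Proof. by apply: map_f; rewrite mem_index_enum. Qed.

Lemma transitionE S f x : uniq S -> {subset neighbours x <= S} ->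
  transition f x = \sum_(y <- S) transition_kernel x y * f y.
Proof.
move=> uS nS; rewrite /transition /transition_kernel.
under [RHS]eq_bigr => y _ do rewrite mulr_suml.
rewrite exchange_big /=; apply: eq_bigr => u _.
under eq_bigr => y _ do rewrite -mulrA.
rewrite -mulr_sumr (bigD1_seq (x - step_vec u)) ?nS ?mem_neighbours //= eqxx mul1r.
by rewrite big1 ?addr0 // => y /negbTE->; rewrite mul0r.
Qed.

Definition stay_prob t (C : nat -> set (Zd d)) x : R :=
  \sum_(w : {ffun 'I_t -> step d}) path_prob R w *
    \prod_(s < t.+1) \1_(C s) (x - walk_pos w s).

Definition path_cons t u (w : {ffun 'I_t -> step d}) : {ffun 'I_t.+1 -> step d} :=
  [ffun i => if unlift ord0 i is Some j then w j else u].

Lemma sum_path_cons t (F : {ffun 'I_t.+1 -> step d} -> R) :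
  \sum_(w : {ffun 'I_t.+1 -> step d}) F w =
  \sum_(u : step d) \sum_(w : {ffun 'I_t -> step d}) F (path_cons u w).
Proof.
rewrite pair_big /= (reindex (fun p : step d * {ffun 'I_t -> step d} => path_cons p.1 p.2)) //=.
exists (fun w => (w ord0, [ffun j => w (lift ord0 j)])) => [[u w] _|w _] /=.
  rewrite ffunE unlift_none; congr pair.
  by apply/ffunP => j; rewrite !ffunE liftK.
by apply/ffunP => i; rewrite ffunE; case: unliftP => [j ->|->]; rewrite ?ffunE.
Qed.

Lemma path_prob_cons t u (w : {ffun 'I_t -> step d}) :
  path_prob R (path_cons u w) = step_prob R u * path_prob R w.
Proof.
rewrite /path_prob big_ord_recl ffunE unlift_none; congr (_ * _).
by apply: eq_bigr => i _; rewrite ffunE liftK.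
Qed.

Lemma walk_pos0 t (w : {ffun 'I_t -> step d}) : walk_pos w 0 = 0.
Proof. by rewrite /walk_pos big_pred0. Qed.

Lemma walk_pos_cons t u (w : {ffun 'I_t -> step d}) s :
  walk_pos (path_cons u w) s.+1 = step_vec u + walk_pos w s.
Proof.
rewrite /walk_pos big_mkcond big_ord_recl /= ffunE unlift_none.
congr (_ + _); rewrite [RHS]big_mkcond; apply: eq_bigr => i _.
by rewrite ffunE liftK /bump leq0n add1n ltnS.
Qed.

Lemma stay_prob0 C x : stay_prob 0 C x = \1_(C 0%N) x.
Proof.
rewrite /stay_prob (big_pred1 [ffun=> None]) => [|w]; last first.
  by apply/esym/eqP/ffunP => -[].
by rewrite /path_prob big_ord0 mul1r big_ord1 walk_pos0 subr0.
Qed.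

Lemma stay_probS t C x : stay_prob t.+1 C x =
  \1_(C 0%N) x * transition (stay_prob t (fun s => C s.+1)) x.
Proof.
rewrite /stay_prob sum_path_cons mulr_sumr; apply: eq_bigr => u _.
rewrite !mulr_sumr; apply: eq_bigr => w _.
rewrite path_prob_cons big_ord_recl walk_pos0 subr0.
under eq_bigr => i _ do rewrite lift0 walk_pos_cons opprD addrA.
by rewrite mulrCA -!mulrA.
Qed.
End Walk.

Section WalkDomination.
Variables (R : realType) (d : nat) (sigma : Zd d -> Zd d) (H0 Hp Hm : set (Zd d)).
Hypothesis hrefl : is_reflection sigma H0 Hp Hm.
Local Notation dominated := (two_point_dominated sigma H0 Hp).
Local Notation K := (transition_kernel R).

Lemma two_point_dominated_transition (f g : Zd d -> R) :
  dominated f g -> dominated (transition f) (transition g).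
Proof.
move=> fg.
have K_ge0 (x y : Zd d) : 0 <= K x y.
  by rewrite transition_kernel_dist lazy_weight_ge0.
have K_sigma (x y : Zd d) : K (sigma x) (sigma y) = K x y.
  by rewrite !transition_kernel_dist (sigma_dist1 hrefl).
have K_Hp (x y : Zd d) : Hp x -> Hp y -> K x (sigma y) <= K x y.
  by move=> px py; rewrite !transition_kernel_dist lazy_weight_antitone // ltnW // (Hp_dist1 hrefl).
pose S x := sigma_closure sigma (neighbours x ++ neighbours (sigma x)).
have SE (h : Zd d -> R) x :
    transition h x = \sum_(y <- S x) K x y * h y /\
    transition h (sigma x) = \sum_(y <- S x) K (sigma x) y * h y.
  by split; apply: transitionE (sigma_closure_uniq _ _) _ => z zN;
    apply: sigma_closure_sub; rewrite mem_cat zN ?orbT.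
split=> x; have [Pg_ge0 Pf_le Pf_pd] := two_point_dominated_kernel hrefl K_ge0 K_sigma K_Hp
  (S := S x) x (sigma_closure_uniq _ _) (@sigma_closure_closed _ _ (sigmaK hrefl) _) fg;
by case: (SE f x) (SE g x) => [Efx Efsx] [Egx Egsx]; rewrite ?Efsx ?Egsx ?Efx ?Egx.
Qed.

Lemma two_point_dominated_stay_prob t (C : nat -> set (Zd d)) :
  dominated (stay_prob R t C) (stay_prob R t (fun s => two_point sigma H0 Hp Hm (C s))).
Proof.
elim: t C => [|t IH] C.
  have E A : stay_prob R 0 A = \1_(A 0%N) \* (fun=> 1).
    by apply/funext => x; rewrite stay_prob0 /= mulr1.
  by rewrite !E; apply/(two_point_dominated_indic hrefl)/two_point_dominated_cst1.
have E A : stay_prob R t.+1 A = \1_(A 0%N) \* transition (stay_prob R t (fun s => A s.+1)).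
  by apply/funext => x; rewrite stay_probS.
by rewrite !E; apply/(two_point_dominated_indic hrefl)/two_point_dominated_transition/IH.
Qed.
End WalkDomination.

Lemma counting_sum_indic (R : realType) (T : choiceType) (V : set T) (F : seq T) :
  finite_set V -> uniq F -> (forall z, V z -> z \in F) ->
  counting V = (\sum_(z <- F) \1_V z)%:E :> \bar R.
Proof.
move=> fV uF VF; rewrite /counting asboolT // card_fset_sum1 natr_sum.
have -> : \sum_(z <- F) \1_V z = \sum_(z <- F | z \in V) 1 :> R.
  by rewrite [RHS]big_mkcond; apply: eq_bigr => z _; rewrite indicE; case: (z \in V).
congr EFin; rewrite -[RHS]big_filter; apply: perm_big.
apply: uniq_perm; rewrite ?fset_uniq ?filter_uniq // => z.
by rewrite mem_filter in_fset_set //; apply/idP/andP => [/[dup]/set_mem/VF|[]].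
Qed.

Section RangeVolume.
Variables (R : realType) (d : nat).
Implicit Types (A : nat -> set (Zd d)) (z : Zd d).

Definition walk_range t A (w : {ffun 'I_t -> step d}) :=
  \bigcup_(s in [set s : nat | (s <= t)%N]) translate (walk_pos w s) (A s).
Arguments walk_range : clear implicits.

Lemma walk_rangeP t A w z :
  walk_range t A w z <-> exists2 s, (s < t.+1)%N & A s (z - walk_pos w s).
Proof.
split=> [[s st [y Ay <-]]|[s st Az]]; first by exists s; rewrite // addrAC subrr add0r.
by exists s => //; exists (z - walk_pos w s); rewrite // addrC subrK.
Qed.

Lemma indic_walk_range t A w z : \1_(walk_range t A w) z =
  1 - \prod_(s < t.+1) \1_(~` A s) (z - walk_pos w s) :> R.
Proof.
rewrite indicE; have [hz|out] := pselect (walk_range t A w z).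
  have /walk_rangeP[s st Az] := hz.
  by rewrite (mem_set hz) (bigD1 (Ordinal st)) //= indicE in_setC (mem_set Az) mul0r subr0.
rewrite memNset // big1 ?subrr // => s _; rewrite indicE in_setC memNset //.
by move=> Az; apply: out; apply/walk_rangeP; exists s.
Qed.

Lemma walk_range_finite t A w : (forall s, (s <= t)%N -> finite_set (A s)) ->
  finite_set (walk_range t A w).
Proof.
move=> fA; apply: bigcup_finite => [|s /fA/(finite_image (+%R (walk_pos w s)))//].
by apply: (@sub_finite_set _ _ `I_t.+1 _ (finite_II _)) => s /=; rewrite ltnS.
Qed.

Lemma expected_range_volE t A (F : seq (Zd d)) :
  (forall s, (s <= t)%N -> finite_set (A s)) -> uniq F ->
  (forall w z, walk_range t A w z -> z \in F) ->
  expected_range_vol R t A = (\sum_(z <- F)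
    (\sum_(w : {ffun 'I_t -> step d}) path_prob R w - stay_prob R t (fun s => ~` A s) z))%:E.
Proof.
move=> fA uF AF; rewrite /expected_range_vol.
under eq_bigr => w _ do
  rewrite /vol (counting_sum_indic _ (walk_range_finite w fA) uF (AF w)) -EFinM.
rewrite sumEFin; congr EFin; under eq_bigr => w _ do rewrite mulr_sumr.
rewrite exchange_big /=; apply: eq_bigr => z _; rewrite /stay_prob -sumrB.
by apply: eq_bigr => w _; rewrite indic_walk_range mulrBr mulr1.
Qed.

Lemma path_prob_ge0 t (w : {ffun 'I_t -> step d}) : 0 <= path_prob R w.
Proof. by apply: prodr_ge0 => i _; exact: step_prob_ge0. Qed.

Lemma expected_range_vol_infinite t A s : (s <= t)%N -> ~ finite_set (A s) ->
  expected_range_vol R t A = +oo%E.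
Proof.
move=> st infA; pose w0 : {ffun 'I_t -> step d} := [ffun=> None].
have w0_gt0 : 0 < path_prob R w0 by apply: prodr_gt0 => i _; rewrite ffunE /= divr_gt0.
have range_w0 : vol R (walk_range t A w0) = +oo%E.
  rewrite /vol /counting asboolF // => fin; apply: infA.
  apply: sub_finite_set (finite_image (fun y => y - walk_pos w0 s) fin) => y Ay.
  exists (walk_pos w0 s + y); last by rewrite addrAC subrr add0r.
  by apply/walk_rangeP; exists s; rewrite ?ltnS // addrAC subrr add0r.
rewrite /expected_range_vol (bigD1 w0) //= -/(walk_range t A w0) range_w0.
rewrite gt0_muley ?lte_fin //; apply/eqP; rewrite eq_le leey lee_paddr //.
apply: sume_ge0 => w _; rewrite mule_ge0 ?lee_fin ?path_prob_ge0 // /vol /counting.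
by case: ifP; rewrite ?lee_fin ?le0y.
Qed.

Lemma walk_range_cover t A B (sigma : Zd d -> Zd d) : involutive sigma ->
  (forall s, (s <= t)%N -> finite_set (A s)) -> (forall s, (s <= t)%N -> finite_set (B s)) ->
  exists F, [/\ uniq F, {in F, forall z, sigma z \in F},
    forall w z, walk_range t A w z -> z \in F & forall w z, walk_range t B w z -> z \in F].
Proof.
move=> sigma_inv fA fB.
pose V := \bigcup_(w in [set: {ffun 'I_t -> step d}]) (walk_range t A w `|` walk_range t B w).
have finV : finite_set V.
  apply: bigcup_finite => [|w _]; first exact: finite_finset.
  by rewrite finite_setU; split; exact: walk_range_finite.
have VF z : V z -> z \in sigma_closure sigma (fset_set V).
  by move=> Vz; apply/sigma_closure_sub; rewrite in_fset_set // mem_set.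
exists (sigma_closure sigma (fset_set V)); split.
- exact: sigma_closure_uniq.
- exact: sigma_closure_closed.
- by move=> w z hz; apply: VF; exists w => //; left.
- by move=> w z hz; apply: VF; exists w => //; right.
Qed.
End RangeVolume.
Arguments walk_range {d} t A w.

Theorem lemma3p3 (R : realType) (d : nat) (hd : (1 <= d)%N)
  (D : nat -> set (Zd d)) (hsym : forall s, D s = negset (D s))
  (sigma : Zd d -> Zd d) (H0 Hp Hm : set (Zd d))
  (hrefl : is_reflection sigma H0 Hp Hm) (t : nat) :
  (expected_range_vol R t (fun s => two_point sigma H0 Hp Hm (D s))
     <= expected_range_vol R t D)%E.
Proof.
have [finD|] := pselect (forall s, (s <= t)%N -> finite_set (D s)); last first.
  move=> /existsNP[s /not_implyP[st infD]].
  by rewrite (expected_range_vol_infinite R st infD) leey.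
pose Ds s := two_point sigma H0 Hp Hm (D s).
have finDs s : (s <= t)%N -> finite_set (Ds s) by move=> /finD; exact: two_point_finite.
have [F [uF cF DF DsF]] := walk_range_cover (sigmaK hrefl) finD finDs.
rewrite (expected_range_volE _ finDs uF DsF) (expected_range_volE _ finD uF DF) lee_fin.
have hswap := reflection_swap hrefl.
have := two_point_dominated_sum_le hswap uF cF
  (two_point_dominated_stay_prob R hswap t (fun s => ~` D s)).
have -> : (fun s => two_point sigma H0 Hm Hp (~` D s)) = fun s => ~` Ds s.
  by apply/funext => s; rewrite /Ds (two_pointC _ hrefl).
by rewrite !sumrB; lra.
Qed.
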